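(* Let $H$ be a graph with $V(H)=[k]$ and let $p\in\mathbb{R}[x_1,\ldots,x_k]$ be a polynomial with $p(x)\ge0$ for all $x\in\mathbb{R}^k$. Then the labeled quantum graph $\varphi_H(p)$ is positive, i.e. $t(\varphi_H(p);G,\phi)\ge0$ for every graph $G$ and every map $\phi:[k]\to V(G)$.
   Context: All graphs are finite and simple. A partially labeled graph is a graph in which some vertices carry distinct positive-integer labels; $\mathcal{F}_L$ denotes the set (up to label-preserving isomorphism) of partially labeled graphs whose set of labels is exactly $L$. The product $H_1\cdot H_2$ is the disjoint union with equally labeled vertices identified (multiple edges merged), and $\mathbb{R}[\mathcal{F}_L]$ is the algebra of formal finite real linear combinations of elements of $\mathcal{F}_L$ with this product extended bilinearly. For $F\in\mathcal{F}_L$, a graph $G$ and $\phi:L\to V(G)$, $t(F;G,\phi)$ is the probability that the map sending each labeled vertex with label $\ell$ to $\phi(\ell)$ and each unlabeled vertex to an independent uniformly random vertex of $G$ is a homomorphism; this is extended linearly to $\mathbb{R}[\mathcal{F}_L]$. For a partially labeled graph $F$, ${\operatorname{ind}}(F):=\sum_{F'}(-1)^{|E(F')\setminus E(F)|}F'$, the sum over all partially labeled graphs $F'$ with the same vertex set and labels as $F$ and $E(F')\supseteq E(F)$. Given $H$ with $V(H)=[k]$, regard it as fully labeled (vertex $j$ has label $j$). For $j\in[k]$, $H_j\in\mathcal{F}_{[k]}$ is obtained from $H$ by adding an unlabeled vertex $v$ adjacent exactly to the neighbours of $j$, and $H_j'$ is obtained from $H_j$ by adding the edge $vj$. $\varphi_H:\mathbb{R}[x_1,\ldots,x_k]\to\mathbb{R}[\mathcal{F}_{[k]}]$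 is the unique unital algebra homomorphism (the unit of $\mathbb{R}[\mathcal{F}_{[k]}]$ being the edgeless graph with $k$ vertices labeled $1,\ldots,k$) with $\varphi_H(x_j)={\operatorname{ind}}(H_j)+{\operatorname{ind}}(H_j')$ for all $j\in[k]$. *)

From HB Require Import structures.
From mathcomp Require Import all_boot all_order all_algebra.
From mathcomp Require Import mpoly.
From mathcomp Require Import reals.

Set Implicit Arguments.
Unset Strict Implicit.
Unset Printing Implicit Defensive.

Import Order.TTheory GRing.Theory Num.Theory.
Local Open Scope ring_scope.

Section Defs.
Variable R : realType.
Variable k : nat.

(* A partially labeled graph with label set exactly [k]:
   [nu] unlabeled vertices; vertex set 'I_(k + nu), where the vertex
   [lshift nu i] (i : 'I_k) carries label i+1 and the vertices
   [rshift k j] (j : 'I_nu) are unlabeled.  Edges are 2-element vertex sets. *)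
Record plgraph := PLGraph {
  pl_nu : nat;
  pl_edges : {set {set 'I_(k + pl_nu)}}
}.

Definition all_pairs (n : nat) : {set {set 'I_n}} := [set e : {set 'I_n} | #|e| == 2%N].

(* Homomorphism density t(F; G, phi): probability that mapping labeled vertex
   with label i+1 to phi i and unlabeled vertices to independent uniform
   random vertices of G gives a homomorphism.  G = (T, adj). *)
Definition plmap (T : Type) nu (phi : 'I_k -> T) (f : 'I_nu -> T)
  (v : 'I_(k + nu)) : T :=
  match split v with inl i => phi i | inr j => f j end.

Definition is_hom (T : finType) (adj : rel T) (F : plgraph)
  (g : 'I_(k + pl_nu F) -> T) : bool :=
  [forall e in pl_edges F, forall x in e, forall y in e,
     (x != y) ==> adj (g x) (g y)].

Definition tdens (T : finType) (adj : rel T) (phi : 'I_k -> T)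
  (F : plgraph) : R :=
  (#|[set f : {ffun 'I_(pl_nu F) -> T} | is_hom adj (plmap phi f)]|%:R)
  / (#|T| ^ pl_nu F)%:R.

(* The algebra R[F_[k]]: formal finite real linear combinations of
   partially labeled graphs, represented by lists of (coefficient, graph). *)
Definition qgraph := seq (R * plgraph).

Definition qt (T : finType) (adj : rel T) (phi : 'I_k -> T) (q : qgraph) : R :=
  \sum_(c <- q) c.1 * tdens adj phi c.2.

(* product of partially labeled graphs: disjoint union, equally labeled
   vertices identified, multiple edges merged *)
Definition emb1 n1 n2 (v : 'I_(k + n1)) : 'I_(k + (n1 + n2)) :=
  match split v with
  | inl i => lshift (n1 + n2) i
  | inr j => rshift k (lshift n2 j)
  end.
Definition emb2 n1 n2 (v : 'I_(k + n2)) : 'I_(k + (n1 + n2)) :=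
  match split v with
  | inl i => lshift (n1 + n2) i
  | inr j => rshift k (rshift n1 j)
  end.

Definition plmul (F1 F2 : plgraph) : plgraph :=
  @PLGraph (pl_nu F1 + pl_nu F2)
    ([set (@emb1 (pl_nu F1) (pl_nu F2)) @: e | e : {set 'I_(k + pl_nu F1)} in pl_edges F1] :|:
     [set (@emb2 (pl_nu F1) (pl_nu F2)) @: e | e : {set 'I_(k + pl_nu F2)} in pl_edges F2]).

Definition qadd (q1 q2 : qgraph) : qgraph := q1 ++ q2.
Definition qscale (a : R) (q : qgraph) : qgraph := [seq (a * c.1, c.2) | c <- q].
Definition qmul (q1 q2 : qgraph) : qgraph :=
  [seq (c1.1 * c2.1, plmul c1.2 c2.2) | c1 <- q1, c2 <- q2].

Definition plunit : plgraph := @PLGraph 0 set0.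
Definition qone : qgraph := [:: (1, plunit)].
Definition qexp (q : qgraph) (n : nat) : qgraph := iter n (qmul q) qone.

Definition ind (F : plgraph) : qgraph :=
  [seq ((-1) ^+ #|E' :\: pl_edges F|, @PLGraph (pl_nu F) E')
  | E' <- enum [set E' : {set {set 'I_(k + pl_nu F)}} | (pl_edges F \subset E') && (E' \subset all_pairs _)]].

(* H on vertex set 'I_k (vertex i is vertex i+1 of [k]), given by a
   symmetric irreflexive adjacency relation h.  H_j: add an unlabeled vertex v
   adjacent exactly to the neighbours of j; H_j': additionally add edge vj. *)
Definition H_edges (h : rel 'I_k) : {set {set 'I_(k + 1)}} :=
  [set e : {set 'I_(k + 1)} |
     [exists a : 'I_k, exists b : 'I_k, h a b && (e == [set lshift 1 a; lshift 1 b])]].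

Definition newv : 'I_(k + 1) := rshift k (@ord0 0).

Definition Hj (h : rel 'I_k) (j : 'I_k) : plgraph :=
  @PLGraph 1 (H_edges h :|: [set e : {set 'I_(k + 1)} |
     [exists i : 'I_k, h j i && (e == [set newv; lshift 1 i])]]).

Definition Hj' (h : rel 'I_k) (j : 'I_k) : plgraph :=
  @PLGraph 1 ([set [set newv; lshift 1 j]] :|: pl_edges (Hj h j)).

Definition phiH_gen (h : rel 'I_k) (j : 'I_k) : qgraph :=
  qadd (ind (Hj h j)) (ind (Hj' h j)).

(* the unital algebra homomorphism phi_H : R[x_1..x_k] -> R[F_[k]]
   with x_j |-> ind(H_j) + ind(H_j'), i.e.
   phi_H(p) = sum_m p_m prod_j (phi_H(x_j))^(m_j) *)
Definition phiH (h : rel 'I_k) (p : {mpoly R[k]}) : qgraph :=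
  foldr qadd [::]
    [seq qscale (p@_m)
         (foldr qmul qone [seq qexp (phiH_gen h j) (m j) | j <- enum 'I_k])
    | m <- msupp p].

End Defs.

(* The density t(-; G, phi) is multiplicative on labeled graphs with label set
   [k]: a map of the unlabeled vertices of F1 * F2 is a pair of maps of the
   unlabeled vertices of F1 and of F2, and it is a homomorphism iff both
   components are.  Being also linear and unital, t(-; G, phi) turns phi_H(p)
   into p evaluated at the point (t(phi_H(x_j); G, phi))_j, which is
   nonnegative by hypothesis. *)
From HB Require Import structures.
From mathcomp Require Import all_boot all_order all_algebra.
From mathcomp Require Import mpoly.
From mathcomp Require Import reals.
Import Order.TTheory GRing.Theory Num.Theory.
Local Open Scope ring_scope.
Set Implicit Arguments.
Unset Strict Implicit.

Lemma split_lshift m n (i : 'I_m) : split (lshift n i) = inl i.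
Proof. exact: (@unsplitK m n (inl i)). Qed.

Lemma split_rshift m n (i : 'I_n) : split (rshift m i) = inr i.
Proof. exact: (@unsplitK m n (inr i)). Qed.

Section FfunCat.
Variables (T : finType) (n1 n2 : nat).

Definition ffun_left (f : {ffun 'I_(n1 + n2) -> T}) : {ffun 'I_n1 -> T} :=
  [ffun j => f (lshift n2 j)].
Definition ffun_right (f : {ffun 'I_(n1 + n2) -> T}) : {ffun 'I_n2 -> T} :=
  [ffun j => f (rshift n1 j)].
Definition ffun_cat (u : {ffun 'I_n1 -> T} * {ffun 'I_n2 -> T}) :
    {ffun 'I_(n1 + n2) -> T} :=
  [ffun v => match split v with inl i => u.1 i | inr j => u.2 j end].
Definition ffun_split f := (ffun_left f, ffun_right f).

Lemma ffun_catK : cancel ffun_cat ffun_split.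
Proof.
by case=> a b; congr pair; apply/ffunP => i;
  rewrite !ffunE ?split_lshift ?split_rshift.
Qed.

Lemma ffun_splitK : cancel ffun_split ffun_cat.
Proof.
move=> f; apply/ffunP => v; rewrite !ffunE.
by case: (split_ordP v) => j ->; rewrite ?split_lshift ?split_rshift ffunE.
Qed.

Lemma card_ffun_split (P1 : pred {ffun 'I_n1 -> T}) (P2 : pred {ffun 'I_n2 -> T}) :
  #|[set f | P1 (ffun_left f) && P2 (ffun_right f)]| =
  (#|[set a | P1 a]| * #|[set b | P2 b]|)%N.
Proof.
have -> : [set f | P1 (ffun_left f) && P2 (ffun_right f)] =
          ffun_cat @: setX [set a | P1 a] [set b | P2 b].
  by rewrite (can2_imset_pre _ ffun_catK ffun_splitK); apply/setP => f; rewrite !inE.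
by rewrite card_imset ?cardsX //; apply: can_inj ffun_catK.
Qed.

End FfunCat.

Section Density.
Variables (R : realType) (k : nat) (T : finType) (adj : rel T) (phi : 'I_k -> T).

Definition clique_on n (g : 'I_n -> T) (e : {set 'I_n}) :=
  [forall x in e, forall y in e, (x != y) ==> adj (g x) (g y)].

Lemma is_homE (F : plgraph k) (g : 'I_(k + pl_nu F) -> T) :
  is_hom adj g = [forall e in pl_edges F, clique_on g e].
Proof. by []. Qed.

Lemma clique_on_imset m n (em : 'I_m -> 'I_n) (g : 'I_n -> T) (g' : 'I_m -> T)
    (e : {set 'I_m}) :
  injective em -> (forall v, g (em v) = g' v) ->
  clique_on g (em @: e) = clique_on g' e.
Proof.
move=> em_inj gem; apply/forall_inP/forall_inP => [cl x xe|cl _ /imsetP[x xe ->]].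
  apply/forall_inP => y ye; rewrite -!gem -(inj_eq em_inj).
  by have /forall_inP := cl _ (imset_f em xe); apply; apply: imset_f.
apply/forall_inP => _ /imsetP[y ye ->]; rewrite (inj_eq em_inj) !gem.
by have /forall_inP := cl x xe; apply.
Qed.

Lemma emb1_inj n1 n2 : injective (@emb1 k n1 n2).
Proof.
move=> v w; rewrite /emb1.
case: (split_ordP v) => a ->; case: (split_ordP w) => b ->;
  rewrite ?split_lshift ?split_rshift => /eqP;
  by rewrite ?(eq_rshift, eq_lshift, eq_lrshift, eq_rlshift) // => /eqP->.
Qed.

Lemma emb2_inj n1 n2 : injective (@emb2 k n1 n2).
Proof.
move=> v w; rewrite /emb2.
case: (split_ordP v) => a ->; case: (split_ordP w) => b ->;
  rewrite ?split_lshift ?split_rshift => /eqP;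
  by rewrite ?(eq_rshift, eq_lshift, eq_lrshift, eq_rlshift) // => /eqP->.
Qed.

Lemma plmap_emb1 n1 n2 (f : {ffun 'I_(n1 + n2) -> T}) v :
  plmap phi f (@emb1 k n1 n2 v) = plmap phi (ffun_left f) v.
Proof.
rewrite /emb1 /plmap.
by case: (split_ordP v) => j _ /=; rewrite ?split_lshift ?split_rshift ?ffunE.
Qed.

Lemma plmap_emb2 n1 n2 (f : {ffun 'I_(n1 + n2) -> T}) v :
  plmap phi f (@emb2 k n1 n2 v) = plmap phi (ffun_right f) v.
Proof.
rewrite /emb2 /plmap.
by case: (split_ordP v) => j _ /=; rewrite ?split_lshift ?split_rshift ?ffunE.
Qed.

Lemma is_hom_plmul (F1 F2 : plgraph k) (f : {ffun 'I_(pl_nu F1 + pl_nu F2) -> T}) :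
  is_hom adj (F := plmul F1 F2) (plmap phi f) =
  is_hom adj (F := F1) (plmap phi (ffun_left f)) &&
  is_hom adj (F := F2) (plmap phi (ffun_right f)).
Proof.
have cl1 (e : {set 'I_(k + pl_nu F1)}) :
    clique_on (plmap phi f) (@emb1 k _ (pl_nu F2) @: e) =
    clique_on (plmap phi (ffun_left f)) e.
  by apply: clique_on_imset; [apply: emb1_inj | apply: plmap_emb1].
have cl2 (e : {set 'I_(k + pl_nu F2)}) :
    clique_on (plmap phi f) (@emb2 k (pl_nu F1) _ @: e) =
    clique_on (plmap phi (ffun_right f)) e.
  by apply: clique_on_imset; [apply: emb2_inj | apply: plmap_emb2].
rewrite !is_homE; apply/forall_inP/andP => [hom | [/forall_inP hom1 /forall_inP hom2] e].
  split; apply/forall_inP => e eF.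
    by rewrite -cl1; apply: hom; rewrite inE imset_f.
  by rewrite -cl2; apply: hom; rewrite inE imset_f ?orbT.
rewrite inE => /orP[] /imsetP[e' e'F ->].
  by rewrite cl1; apply: hom1.
by rewrite cl2; apply: hom2.
Qed.

Lemma tdens_plmul (F1 F2 : plgraph k) :
  tdens R adj phi (plmul F1 F2) = tdens R adj phi F1 * tdens R adj phi F2.
Proof.
rewrite /tdens /=.
under eq_finset => f do rewrite [is_hom _ _]is_hom_plmul.
rewrite (card_ffun_split (fun a => is_hom adj (F := F1) (plmap phi a))
                         (fun b => is_hom adj (F := F2) (plmap phi b))).
by rewrite expnD !natrM invfM mulrACA.
Qed.

Lemma tdens_plunit : tdens R adj phi (plunit k) = 1.
Proof.
rewrite /tdens /= expn0 divr1.
have -> : [set f : {ffun 'I_0 -> T} | is_hom adj (F := plunit k) (plmap phi f)] = setT.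
  by apply/setP => f; rewrite !inE; apply/forall_inP => e; rewrite inE.
by rewrite cardsT card_ffun card_ord expn0.
Qed.

Lemma qt_qadd q1 q2 : qt adj phi (qadd q1 q2) = qt adj phi q1 + qt adj phi q2 :> R.
Proof. by rewrite /qt big_cat. Qed.

Lemma qt_qscale (a : R) q : qt adj phi (qscale a q) = a * qt adj phi q.
Proof. by rewrite /qt big_map mulr_sumr; apply: eq_bigr => c _; rewrite mulrA. Qed.

Lemma qt_qmul (q1 q2 : qgraph R k) :
  qt adj phi (qmul q1 q2) = qt adj phi q1 * qt adj phi q2.
Proof.
rewrite /qt big_allpairs_dep mulr_suml; apply: eq_bigr => c1 _.
by rewrite mulr_sumr; apply: eq_bigr => c2 _; rewrite tdens_plmul mulrACA.
Qed.

Lemma qt_qone : qt adj phi (qone R k) = 1.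
Proof. by rewrite /qt big_seq1 tdens_plunit mulr1. Qed.

Lemma qt_qexp (q : qgraph R k) n : qt adj phi (qexp q n) = qt adj phi q ^+ n.
Proof.
elim: n => [|n IHn]; first by rewrite qt_qone.
by rewrite /qexp iterS -/(qexp q n) qt_qmul IHn exprS.
Qed.

Lemma qt_foldr_qadd (qs : seq (qgraph R k)) :
  qt adj phi (foldr (@qadd R k) [::] qs) = \sum_(q <- qs) qt adj phi q.
Proof.
elim: qs => [|q qs IHqs]; first by rewrite big_nil /qt big_nil.
by rewrite big_cons /= qt_qadd IHqs.
Qed.

Lemma qt_foldr_qmul (qs : seq (qgraph R k)) :
  qt adj phi (foldr (@qmul R k) (qone R k) qs) = \prod_(q <- qs) qt adj phi q.
Proof.
elim: qs => [|q qs IHqs]; first by rewrite big_nil qt_qone.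
by rewrite big_cons /= qt_qmul IHqs.
Qed.

Lemma qt_phiH (h : rel 'I_k) (p : {mpoly R[k]}) :
  qt adj phi (phiH h p) = p.@[fun j => qt adj phi (phiH_gen R h j)].
Proof.
rewrite /phiH qt_foldr_qadd big_map mevalE; apply: eq_bigr => m _.
rewrite qt_qscale qt_foldr_qmul big_map big_enum /=; congr (_ * _).
by apply: eq_bigr => j _; rewrite qt_qexp.
Qed.

End Density.

Theorem lemma3p2 (R : realType) (k : nat) (h : rel 'I_k)
  (h_sym : ssrbool.symmetric h) (h_irr : irreflexive h)
  (p : {mpoly R[k]}) (p_nonneg : forall x : 'I_k -> R, 0 <= p.@[x])
  (T : finType) (adj : rel T) (adj_sym : ssrbool.symmetric adj)
  (adj_irr : irreflexive adj) (phi : 'I_k -> T) :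
  0 <= qt adj phi (phiH h p).
Proof. by rewrite qt_phiH; apply: p_nonneg. Qed.
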